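(* Let $\mu,\nu$ be Borel probability measures on $\mathbb R$ such that $\operatorname{diam}\operatorname{supp}\mu=\operatorname{diam}\operatorname{supp}\nu<\infty$ and $\mu\prec\nu$. Then the mm-spaces $(\mathbb R,|\cdot|,\mu)$ and $(\mathbb R,|\cdot|,\nu)$ are mm-isomorphic.
   Context: An mm-space is a triple $(X,d_X,\mu_X)$ where $(X,d_X)$ is a complete separable metric space and $\mu_X$ is a Borel probability measure. Two mm-spaces $X,Y$ are mm-isomorphic if there is an isometry $f:\operatorname{supp}\mu_X\to\operatorname{supp}\mu_Y$ with $f_*\mu_X=\mu_Y$. For mm-spaces, $Y\prec X$ if there is a 1-Lipschitz map $f:\operatorname{supp}\mu_X\to\operatorname{supp}\mu_Y$ with $f_*\mu_X=\mu_Y$. For Borel probability measures $\mu,\nu$ on $\mathbb R$, $\mu\prec\nu$ means $(\mathbb R,|\cdot|,\mu)\prec(\mathbb R,|\cdot|,\nu)$. The diameter of a set $A$ is $\sup_{x,y\in A}|x-y|$. *)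

(* Borel probability measures on R are
   [probability R R], where the canonical sigma-algebra on a realType R
   is the Borel one (generated by the half-open intervals). *)
From HB Require Import structures.
From mathcomp Require Import all_boot all_order all_algebra.
From mathcomp Require Import all_classical all_reals all_analysis.
Set Implicit Arguments. Unset Strict Implicit. Unset Printing Implicit Defensive.
Import Order.TTheory GRing.Theory Num.Theory.
Import numFieldTopology.Exports numFieldNormedType.Exports.
Local Open Scope classical_set_scope.
Local Open Scope ring_scope.

Definition supp (R : realType) (mu : probability R R) : set R :=
  [set x : R | forall U : set R, open U -> U x -> (0 < mu U)%E].

Definition diam (R : realType) (A : set R) : \bar R :=
  ereal_sup [set (`|x - y|)%:E | x in A & y in A].

(* f restricted to supp nu pushes nu forward to mu (f defined on supp nu;
   its values outside supp nu are irrelevant) *)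
Definition pushes_on (R : realType) (f : R -> R) (nu mu : probability R R) :=
  forall A : set R, measurable A ->
    measurable (supp nu `&` f @^-1` A) /\ nu (supp nu `&` f @^-1` A) = mu A.

(* mu ≺ nu : (R,|.|,mu) ≺ (R,|.|,nu), i.e. there is a 1-Lipschitz map
   f : supp nu -> supp mu with f_* nu = mu *)
Definition dominated (R : realType) (mu nu : probability R R) : Prop :=
  exists f : R -> R,
    [/\ (forall x, supp nu x -> supp mu (f x)),
        (forall x y, supp nu x -> supp nu y -> `|f x - f y| <= `|x - y|)
      & pushes_on f nu mu].

Definition mm_isomorphic (R : realType) (mu nu : probability R R) : Prop :=
  exists f : R -> R,
    [/\ (forall x, supp mu x -> supp nu (f x)),
        (forall x y, supp mu x -> supp mu y -> `|f x - f y| = `|x - y|)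
      & pushes_on f mu nu].

(* Pushing nu forward along the 1-Lipschitz map f shows that both supports
   have full measure and that f (supp nu) is dense in supp mu.  Both supports
   are compact, with extreme points a <= b and c <= d, and b - a = d - c.
   Points z, w of supp nu with f z close to c and f w close to d must be
   almost b - a apart, which forces |f b - f a| = b - a; a 1-Lipschitz map on
   a subset of [a, b] stretching the endpoints by the full length is
   x |-> f a +- (x - a).  The inverse affine map is the required isometry
   pushing mu forward to nu. *)

From HB Require Import structures.
From mathcomp Require Import all_boot all_order all_algebra.
From mathcomp Require Import all_classical all_reals all_analysis.
From mathcomp Require Import ring lra measurable_realfun.
Import Order.TTheory GRing.Theory Num.Theory.
Import numFieldTopology.Exports numFieldNormedType.Exports.
Set Implicit Arguments. Unset Strict Implicit.
Local Open Scope classical_set_scope.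
Local Open Scope ring_scope.

Section OneLipschitzOnInterval.
Variables (R : realFieldType) (S : set R) (a b : R) (f : R -> R).
Hypotheses (Sa : S a) (Sb : S b) (S_itv : forall x, S x -> a <= x <= b).
Hypothesis f_lip : forall x y, S x -> S y -> `|f x - f y| <= `|x - y|.

Let lip_le x y : S x -> S y -> y <= x -> `|f x - f y| <= x - y.
Proof.
by move=> Sx Sy yx; rewrite -[x - y]ger0_norm ?subr_ge0 //; exact: f_lip.
Qed.

Lemma lip1_image_dist_le z w : S z -> S w ->
  2 * `|f w - f z| <= (b - a) + `|f b - f a|.
Proof.
wlog zw : z w / z <= w.
  move=> gap Sz Sw; have [zw|/ltW wz] := lerP z w; first exact: gap.
  by rewrite distrC; exact: gap.
move=> Sz Sw; have /andP[az _] := S_itv Sz; have /andP[_ wb] := S_itv Sw.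
have fwz := lip_le Sw Sz zw; have fbw := lip_le Sb Sw wb.
have fza := lip_le Sz Sa az.
have tri : `|f w - f z| <= `|f w - f b| + (`|f b - f a| + `|f a - f z|).
  apply: (le_trans (ler_distD (f b) _ _)); rewrite lerD2l.
  exact: ler_distD.
rewrite (distrC (f w) (f b)) (distrC (f a) (f z)) in tri.
lra.
Qed.

Lemma lip1_affine_of_endpoint_dist : `|f b - f a| = b - a ->
  exists2 s : R, `|s| = 1 & forall z, S z -> f z = s * (z - a) + f a.
Proof.
move=> fab.
have bounds z : S z -> `|f z - f a| <= z - a /\ `|f b - f z| <= b - z.
  by move=> Sz; have /andP[az zb] := S_itv Sz; split; exact: lip_le.
have [fab0|fab0] := lerP 0 (f b - f a).
- exists 1; first exact: normr1.
  move=> z /bounds[/ler_normlP[_ ?] /ler_normlP[_ ?]].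
  move: fab; rewrite ger0_norm //; lra.
- exists (-1); first by rewrite normrN normr1.
  move=> z /bounds[/ler_normlP[? _] /ler_normlP[? _]].
  move: fab; rewrite ltr0_norm //; lra.
Qed.

Lemma lip1_endpoint_dist_eq (c d : R) :
  b - a <= d - c ->
  closure (f @` S) c -> closure (f @` S) d -> `|f b - f a| = b - a.
Proof.
move=> len_le clc cld.
have near x e : closure (f @` S) x -> 0 < e -> exists2 z, S z & `|x - f z| < e.
  move=> clx e0; have [_ [[z Sz <-] xz]] := clx _ (nbhsx_ballx _ _ e0).
  by exists z; rewrite // -ball_normE.
have /andP[ab _] := S_itv Sb.
apply/eqP; rewrite eq_le; apply/andP; split.
  by rewrite -[b - a]ger0_norm ?subr_ge0 //; exact: f_lip.
apply/ler_addgt0Pr => e e0.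
have e40 : 0 < e / 4 by rewrite divr_gt0.
have [z Sz /ltr_normlP[cz _]] := near c _ clc e40.
have [w Sw /ltr_normlP[_ wd]] := near d _ cld e40.
have := lip1_image_dist_le Sz Sw; have := ler_norm (f w - f z).
lra.
Qed.

End OneLipschitzOnInterval.

Lemma probability_setI_full d (T : measurableType d) (R : realType)
    (P : probability T R) (S A : set T) :
  measurable S -> P S = 1%E -> measurable A -> P (S `&` A) = P A.
Proof.
move=> mS PS1 mA.
have PAS0 : P (A `\` S) = 0%E.
  apply: (subset_measure0 (B := ~` S)).
  - exact: measurableD.
  - exact: measurableC.
  - by move=> x [].
  - by have := probability_setC P mS; rewrite PS1 subee.
by have /= -> := measureDI P mA mS; rewrite PAS0 add0e setIC.
Qed.

Section Support.
Variable R : realType.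
Implicit Types P : probability R R.

Lemma supp_closed P : closed (supp P).
Proof.
move=> x clx U oU Ux.
have [y [Py Uy]] := clx U (open_nbhs_nbhs (conj oU Ux)).
exact: Py U oU Uy.
Qed.

Lemma measurable_supp P : measurable (supp P).
Proof. by apply: closed_measurable; exact: supp_closed. Qed.

Lemma supp_neq0 P : P (supp P) = 1%E -> supp P !=set0.
Proof.
move=> P1; apply/set0P/negP => /eqP S0.
by move: P1; rewrite S0 measure0 => /esym/eqP; rewrite onee_eq0.
Qed.

End Support.

Lemma diam_ge_dist (R : realType) (S : set R) x y :
  S x -> S y -> (`|x - y|%:E <= diam S)%E.
Proof. by move=> Sx Sy; apply: ereal_sup_ubound; exists x => //; exists y. Qed.

Lemma closed_diam_lt_pinfty_extrema (R : realType) (S : set R) :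
  closed S -> S !=set0 -> (diam S < +oo)%E ->
  [/\ S (inf S), S (sup S), (forall x, S x -> inf S <= x <= sup S)
    & diam S = (sup S - inf S)%:E].
Proof.
move=> clS [x0 Sx0] diam_fin.
have [r diam_r] : exists r, diam S = r%:E.
  move: diam_fin (diam_ge_dist Sx0 Sx0).
  by case: (diam S) => [r| |] //; exists r.
have dist_le x : S x -> `|x - x0| <= r.
  by move=> Sx; rewrite -lee_fin -diam_r; exact: diam_ge_dist.
have supS : has_sup S.
  split; first by exists x0.
  by exists (x0 + r) => x /dist_le; rewrite ler_distl => /andP[].
have lbS : has_lbound S.
  by exists (x0 - r) => x /dist_le; rewrite ler_distl => /andP[].
have S_sup : S (sup S).
  apply: (itv_closed_supremums (ex_intro _ x0 Sx0) clS).
  by split; [exact: sup_upper_bound | move=> y; apply: ge_sup; exists x0].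
have S_inf : S (inf S).
  apply: (itv_closed_infimums (ex_intro _ x0 Sx0) clS).
  by split; [exact: ge_inf | move=> y; apply: lb_le_inf; exists x0].
have S_itv x : S x -> inf S <= x <= sup S.
  by move=> Sx; rewrite (ge_inf lbS) ?(sup_upper_bound supS).
split => //; apply/le_anti/andP; split.
  apply: ge_ereal_sup => _ [x Sx [y Sy <-]]; rewrite lee_fin ler_norml.
  by have := S_itv _ Sx; have := S_itv _ Sy; lra.
have /andP[inf_sup _] := S_itv _ S_sup.
by rewrite -[sup S - inf S]ger0_norm ?subr_ge0 //; exact: diam_ge_dist.
Qed.

Section Pushforward.
Variables (R : realType) (mu nu : probability R R) (f : R -> R).
Hypothesis f_push : pushes_on f nu mu.

Lemma pushes_on_supp_full : nu (supp nu) = 1%E.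
Proof.
by have [_] := f_push measurableT; rewrite preimage_setT setIT probability_setT.
Qed.

Lemma supp_sub_closure_image : supp mu `<=` closure (f @` supp nu).
Proof.
move=> x mux B /nbhs_ballP[e /= e0 eB].
have := mux _ (ball_open x e) (ballxx x e0).
have [_ <-] := f_push (open_measurable (ball_open x e)).
have [->|/set0P[z [nuz fz]]] := eqVneq (supp nu `&` f @^-1` ball x e) set0.
  by rewrite measure0 ltxx.
by move=> _; exists (f z); split; [exists z | exact: eB].
Qed.

Hypothesis f_supp : forall x, supp nu x -> supp mu (f x).

Lemma pushes_on_supp_full_image : mu (supp mu) = 1%E.
Proof.
have [_ <-] := f_push (measurable_supp mu).
have -> : supp nu `&` f @^-1` supp mu = supp nu.
  by apply/seteqP; split => [x []//|x nux]; split => //; exact: f_supp.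
exact: pushes_on_supp_full.
Qed.

Lemma pushes_on_inverse (g : R -> R) : measurable_fun setT g ->
  (forall z, supp nu z -> g (f z) = z) -> pushes_on g mu nu.
Proof.
move=> g_meas gf A mA.
have mgA : measurable (supp mu `&` g @^-1` A).
  apply: measurableI; first exact: measurable_supp.
  by rewrite -[_ @^-1` _]setTI; exact: g_meas.
split => //; have [_ <-] := f_push mgA.
have -> : supp nu `&` f @^-1` (supp mu `&` g @^-1` A) = supp nu `&` A.
  apply/seteqP; split => z [nuz fz]; split => //.
    by case: fz; rewrite /preimage /= gf.
  by split; [exact: f_supp | rewrite /preimage /= gf].
apply: probability_setI_full mA; first exact: measurable_supp.
exact: pushes_on_supp_full.
Qed.

End Pushforward.

Lemma continuous_pushes_on_supp (R : realType) (P Q : probability R R)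
    (g : R -> R) :
  continuous g -> P (supp P) = 1%E -> pushes_on g P Q ->
  forall x, supp P x -> supp Q (g x).
Proof.
move=> g_cont P1 g_push x Px U oU Ugx.
have oV : open (g @^-1` U) by exact: (proj1 (continuousP _) g_cont).
have [_ <-] := g_push _ (open_measurable oU).
by rewrite (probability_setI_full (measurable_supp P) P1 (open_measurable oV));
  exact: Px.
Qed.

Lemma mm_isomorphic_of_affine (R : realType) (mu nu : probability R R)
    (f : R -> R) (s t u : R) :
  `|s| = 1 -> (forall x, supp nu x -> supp mu (f x)) -> pushes_on f nu mu ->
  (forall z, supp nu z -> f z = s * (z - t) + u) -> mm_isomorphic mu nu.
Proof.
move=> s1 f_supp f_push f_affine.
pose g x := s * (x - u) + t.
have g_cont : continuous g.
  move=> x; apply: cvgD; last exact: cvg_cst.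
  apply: cvgM; first exact: cvg_cst.
  by apply: cvgB; [exact: cvg_id | exact: cvg_cst].
have /eqP ss : s ^+ 2 == 1 by rewrite sqr_norm_eq1 s1.
have gf z : supp nu z -> g (f z) = z.
  by move=> nuz; rewrite /g f_affine // addrK mulrA -expr2 ss mul1r subrK.
have g_push :=
  pushes_on_inverse f_push f_supp (continuous_measurable_fun g_cont) gf.
have mu1 := pushes_on_supp_full_image f_push f_supp.
exists g; split => //; first exact: continuous_pushes_on_supp g_cont mu1 g_push.
move=> x y _ _; have -> : g x - g y = s * (x - y) by rewrite /g; ring.
by rewrite normrM s1 mul1r.
Qed.

Theorem lemma4p1 (R : realType) (mu nu : probability R R) :
  diam (supp mu) = diam (supp nu) ->
  (diam (supp mu) < +oo)%E ->
  dominated mu nu ->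
  mm_isomorphic mu nu.
Proof.
move=> diam_eq diam_fin [f [f_supp f_lip f_push]].
have mu1 := pushes_on_supp_full_image f_push f_supp.
have nu1 := pushes_on_supp_full f_push.
have [mu_inf mu_sup _ mu_diam] :=
  closed_diam_lt_pinfty_extrema (@supp_closed _ mu) (supp_neq0 mu1) diam_fin.
have diam_fin_nu : (diam (supp nu) < +oo)%E by rewrite -diam_eq.
have [nu_inf nu_sup nu_itv nu_diam] :=
  closed_diam_lt_pinfty_extrema (@supp_closed _ nu) (supp_neq0 nu1) diam_fin_nu.
have len_le : sup (supp nu) - inf (supp nu) <= sup (supp mu) - inf (supp mu).
  by rewrite -lee_fin -nu_diam -mu_diam diam_eq.
have clmu := supp_sub_closure_image f_push.
have f_ends := lip1_endpoint_dist_eq nu_inf nu_sup nu_itv f_lip len_le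
  (clmu _ mu_inf) (clmu _ mu_sup).
have [s s1 f_affine] :=
  lip1_affine_of_endpoint_dist nu_inf nu_sup nu_itv f_lip f_ends.
exact: mm_isomorphic_of_affine s1 f_supp f_push f_affine.
Qed.
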